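(* Let $p\geq1$, $\mu>0$, and let $g:\mathbb{R}^n\to\mathbb{R}\cup\{+\infty\}$ be convex. Let $\lambda^{\ast}$ be the optimal solution of $$\min_{\lambda\in\mathbb{R}^n}\Big\{g(\lambda)+\frac{\mu}{1+\frac1p}\lVert\lambda\rVert^{1+\frac1p}\Big\},$$ and suppose $\lambda^{\ast}\neq0$. Let $\lambda^k\in\mathbb{R}^n$ with $\lVert\lambda^k\rVert>0$, set $t^k=\lVert\lambda^k\rVert^{\frac1p-1}$, and let $\lambda^{k+1}=\arg\min_{\lambda\in\mathbb{R}^n}\{g(\lambda)+\frac{\mu}{2}t^k\lVert\lambda\rVert^2\}$. Then $$(\lambda^{k+1}-\lambda^{\ast})^T\Big\{\lVert\lambda^k\rVert^{1-\frac1p}\lambda^{\ast}-\lVert\lambda^{\ast}\rVert^{1-\frac1p}\lambda^{k+1}\Big\}\geq0,$$ and $$\big(\lVert\lambda^k\rVert^{1-\frac1p}-\lVert\lambda^{\ast}\rVert^{1-\frac1p}\big)(\lambda^{k+1}-\lambda^{\ast})^T\lambda^{k+1}\geq\lVert\lambda^k\rVert^{1-\frac1p}\lVert\lambda^{k+1}-\lambda^{\ast}\rVert^2.$$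
   Context: $\lVert\cdot\rVert$ is the Euclidean norm. The minimizers above are assumed to exist. This is one step of the fixed point iteration: given $\lambda^k$, set $t^k=\lVert\lambda^k\rVert^{1/p-1}$ if $\lambda^k\neq0$ and $t^k=0$ otherwise, and $\lambda^{k+1}=\arg\min_\lambda\{g(\lambda)+\frac{\mu}{2}t^k\lVert\lambda\rVert^2\}$. *)

From mathcomp Require Import all_boot all_order all_algebra.
From mathcomp Require Import all_classical all_reals all_analysis.
Set Implicit Arguments. Unset Strict Implicit. Unset Printing Implicit Defensive.
Import Order.TTheory GRing.Theory Num.Theory.
Local Open Scope ring_scope.

Definition dotv (R : realType) (n : nat) (u v : 'rV[R]_n) : R :=
  \sum_(i < n) u 0 i * v 0 i.

Definition enorm (R : realType) (n : nat) (u : 'rV[R]_n) : R :=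
  Num.sqrt (dotv u u).

(* g : R^n -> R \cup {+oo} convex (extended-valued convexity inequality,
   for t in the open interval ]0,1[ to avoid the 0 * +oo convention). *)
Definition ext_convex (R : realType) (n : nat) (g : 'rV[R]_n -> \bar R) : Prop :=
  (forall x, g x != -oo%E) /\
  (forall (x y : 'rV[R]_n) (t : R), 0 < t < 1 ->
     (g (t *: x + (1 - t) *: y)%R <= t%:E * g x + ((1 - t)%R)%:E * g y)%E).

Definition is_minimizer (R : realType) (n : nat) (F : 'rV[R]_n -> \bar R)
  (x : 'rV[R]_n) : Prop := forall y, (F x <= F y)%E.

(* Write q = 1/p and s = |lstar|.  Weighted AM-GM gives the quadratic majorant
   x^(1+q) <= (1+q)/2 s^(q-1) x^2 + (1-q)/2 s^(1+q), with equality at x = s, so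
   lstar also minimizes g + mu/2 s^(q-1) |.|^2: it is a fixed point of the
   iteration.  For convex g, a minimizer x of g + c |.|^2 satisfies the
   first-order condition g x <= g z + 2c <x, z - x>; adding it for lstar and
   lk1 gives <lk1 - lstar, alpha lstar - beta lk1> >= 0 with
   alpha = mu/2 s^(q-1) and beta = mu/2 |lk|^(q-1).  Multiplying by
   (2/mu) |lk|^(1-q) s^(1-q) gives the first claim; the second is the first
   one after splitting a lstar - b lk1 = (a - b) lk1 - a (lk1 - lstar). *)

From mathcomp Require Import all_boot all_order all_algebra.
From mathcomp Require Import all_classical all_reals all_analysis.
From mathcomp Require Import ring lra.
Import Order.TTheory GRing.Theory Num.Theory.
Local Open Scope ring_scope.

Section EuclideanSpace.
Context {R : realType} {n : nat}.
Implicit Types u v w : 'rV[R]_n.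

Lemma dotvC u v : dotv u v = dotv v u.
Proof. by apply: eq_bigr => i _; rewrite mulrC. Qed.

Lemma dotvDl u v w : dotv (u + v) w = dotv u w + dotv v w.
Proof. by rewrite /dotv -big_split; apply: eq_bigr => i _; rewrite !mxE mulrDl. Qed.

Lemma dotvZl (a : R) u w : dotv (a *: u) w = a * dotv u w.
Proof. by rewrite /dotv mulr_sumr; apply: eq_bigr => i _; rewrite !mxE mulrA. Qed.

Lemma dotvNl u w : dotv (- u) w = - dotv u w.
Proof. by rewrite -scaleN1r dotvZl mulN1r. Qed.

Lemma dotvBl u v w : dotv (u - v) w = dotv u w - dotv v w.
Proof. by rewrite dotvDl dotvNl. Qed.

Lemma dotvDr u v w : dotv w (u + v) = dotv w u + dotv w v.
Proof. by rewrite dotvC dotvDl !(dotvC w). Qed.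

Lemma dotvZr (a : R) u w : dotv w (a *: u) = a * dotv w u.
Proof. by rewrite dotvC dotvZl dotvC. Qed.

Lemma dotvBr u v w : dotv w (u - v) = dotv w u - dotv w v.
Proof. by rewrite !(dotvC w) dotvBl. Qed.

Lemma dotvv_ge0 u : 0 <= dotv u u.
Proof. by apply: sumr_ge0 => i _; rewrite -expr2 sqr_ge0. Qed.

Lemma dotvv_eq0 u : (dotv u u == 0) = (u == 0).
Proof.
apply/idP/eqP => [|->]; last by rewrite /dotv big1 // => i _; rewrite mxE mul0r.
rewrite psumr_eq0 => [/allP u0|i _]; last by rewrite -expr2 sqr_ge0.
apply/matrixP => i j; rewrite ord1 mxE.
by have /implyP/(_ isT) := u0 j (mem_index_enum j); rewrite mulf_eq0 orbb => /eqP.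
Qed.

Lemma enorm_sq u : enorm u ^+ 2 = dotv u u.
Proof. by rewrite sqr_sqrtr // dotvv_ge0. Qed.

Lemma enorm_ge0 u : 0 <= enorm u.
Proof. exact: sqrtr_ge0. Qed.

Lemma enorm_gt0 u : (0 < enorm u) = (u != 0).
Proof. by rewrite sqrtr_gt0 lt_neqAle dotvv_ge0 andbT eq_sym dotvv_eq0. Qed.
End EuclideanSpace.

Section RealInequalities.
Context {R : realType}.

Lemma powR_AM_GM (u v b : R) : 0 <= u -> 0 <= v -> 0 < b <= 1 ->
  u `^ b * v `^ (1 - b) <= b * u + (1 - b) * v.
Proof.
move=> u0 v0 /andP[b0]; rewrite le_eqVlt => /predU1P[->|b1].
  by rewrite subrr powRr0 powRr1 // mulr1 mul1r mul0r addr0.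
have b'0 : 0 < 1 - b by rewrite subr_gt0.
have := conjugate_powR (powR_ge0 u b) (powR_ge0 v (1 - b))
  (eqbRL (invr_gt0 _) b0) (eqbRL (invr_gt0 _) b'0).
rewrite !invrK subrKC -!powRrM !mulfV ?gt_eqF // !powRr1 // => /(_ erefl).
by rewrite (mulrC u) (mulrC v).
Qed.

Lemma powR_le_quad_majorant (q s x : R) : -1 < q <= 1 -> 0 < s -> 0 <= x ->
  x `^ (1 + q) <= (1 + q) / 2 * (s `^ (q - 1) * x ^+ 2) + (1 - q) / 2 * s `^ (1 + q).
Proof.
move=> /andP[q_gt q_le] s0 x0; set b := (1 + q) / 2.
have b01 : 0 < b <= 1 by apply/andP; split; rewrite /b; lra.
have -> : (1 - q) / 2 = 1 - b by rewrite /b; field.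
suff -> : x `^ (1 + q) = (s `^ (q - 1) * x ^+ 2) `^ b * s `^ (1 + q) `^ (1 - b).
  by apply: powR_AM_GM; rewrite ?mulr_ge0 ?powR_ge0 ?sqr_ge0.
rewrite powRM ?powR_ge0 ?sqr_ge0 // -!powRrM -powR_mulrn // -powRrM.
rewrite mulrAC -powRD; last by rewrite (gt_eqF s0) implybT.
have -> : (q - 1) * b + (1 + q) * (1 - b) = 0 by rewrite /b; field.
by rewrite powRr0 mul1r /b mulrC mulfVK ?pnatr_eq0.
Qed.

Lemma ge0_linear_near0 (K M : R) :
  (forall t, 0 < t < 1 -> 0 <= t * K + t ^+ 2 * M) -> 0 <= K.
Proof.
move=> h; rewrite leNgt; apply/negP => K0.
(* With this [t], [t ^+ 2 * M <= - t * K / 2], so [t * K + t ^+ 2 * M < 0]. *)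
set D := `|M| - K; have D0 : 0 < D by rewrite /D; have := normr_ge0 M; lra.
set t := - K / (2 * D).
have t0 : 0 < t by rewrite divr_gt0 ?mulr_gt0 //; lra.
have tD : t * (2 * D) = - K by rewrite /t mulfVK // gt_eqF ?mulr_gt0.
have MD : M <= D by rewrite /D; have := ler_norm M; lra.
have t1 : t < 1 by have := normr_ge0 M; rewrite /D in tD; nra.
have := h t; rewrite t0 t1 => /(_ isT).
rewrite expr2 -mulrA -mulrDr pmulr_rge0 //; nra.
Qed.

End RealInequalities.

Section ConvexMinimizers.
Context {R : realType} {n : nat} {g : 'rV[R]_n -> \bar R}.

Lemma minimizer_majorant (h k : 'rV[R]_n -> R) (C : R) x :
  (forall l, h l <= k l + C) -> h x = k x + C ->
  is_minimizer (fun l => g l + (h l)%:E)%E x ->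
  is_minimizer (fun l => g l + (k l)%:E)%E x.
Proof.
move=> hk hx xmin y; rewrite -(leeD2rE (x := C%:E)) // -!addeA -!EFinD -hx.
by apply: le_trans (xmin y) _; apply: leeD2l; rewrite lee_fin.
Qed.

Lemma minimizer_powR_quad {mu q : R} {x : 'rV[R]_n} : 0 <= mu -> -1 < q <= 1 -> x != 0 ->
  is_minimizer (fun l => g l + (mu / (1 + q) * enorm l `^ (1 + q))%:E)%E x ->
  is_minimizer (fun l => g l + (mu / 2 * enorm x `^ (q - 1) * enorm l ^+ 2)%:E)%E x.
Proof.
move=> mu0 q_range x0; rewrite -enorm_gt0 in x0.
have q1 : 0 < 1 + q by case/andP: q_range; lra.
set s := enorm x; set C := mu / (1 + q) * ((1 - q) / 2 * s `^ (1 + q)).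
apply: (minimizer_majorant _ _ C).
- move=> l; have -> : mu / 2 * s `^ (q - 1) * enorm l ^+ 2 + C =
      mu / (1 + q) * ((1 + q) / 2 * (s `^ (q - 1) * enorm l ^+ 2) + (1 - q) / 2 * s `^ (1 + q)).
    by rewrite /C; field; rewrite gt_eqF.
  apply: ler_wpM2l; first exact: divr_ge0 mu0 (ltW q1).
  exact: powR_le_quad_majorant q_range x0 (enorm_ge0 l).
- have sE : s `^ (1 + q) = s `^ (q - 1) * s ^+ 2.
    rewrite -powR_mulrn ?ltW // -powRD ?(gt_eqF x0) ?implybT //.
    by congr (_ `^ _); lra.
  by rewrite /C -/s sE; field; rewrite gt_eqF.
Qed.

Hypothesis g_convex : ext_convex g.
Hypothesis g_proper : exists x, g x != +oo%E.

Lemma minimizer_fin_num {h : 'rV[R]_n -> R} {x : 'rV[R]_n} :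
  is_minimizer (fun l => g l + (h l)%:E)%E x -> g x \is a fin_num.
Proof.
move=> xmin; rewrite fin_numE g_convex.1 /=; have [x0 gx0] := g_proper.
apply/negP => /eqP gx; have := xmin x0; rewrite gx /=.
by move: gx0 (g_convex.1 x0); case: (g x0).
Qed.

Lemma minimizer_subgradient {c : R} {x : 'rV[R]_n} z :
  is_minimizer (fun l => g l + (c * enorm l ^+ 2)%:E)%E x ->
  (g x <= g z + (2 * c * dotv x (z - x))%:E)%E.
Proof.
move=> xmin; have /fineK gxE := minimizer_fin_num xmin; set G := fine _ in gxE.
case gzE: (g z) => [Z| |]; [|by rewrite leey|by have := g_convex.1 z; rewrite gzE].
rewrite -gxE -EFinD lee_fin -subr_ge0.
apply: (ge0_linear_near0 _ (c * enorm (z - x) ^+ 2)) => t t01.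
have := g_convex.2 z x t t01; rewrite gzE -gxE -!EFinM -EFinD.
have := xmin (t *: z + (1 - t) *: x); rewrite -gxE.
move: (g_convex.1 (t *: z + (1 - t) *: x)).
case: (g _) => [Gt| |] //= _; rewrite -EFinD !lee_fin.
have -> : t *: z + (1 - t) *: x = x + t *: (z - x).
  by rewrite scalerBl scale1r scalerBr addrCA.
move: (z - x) => w.
rewrite !enorm_sq !(dotvDl, dotvDr, dotvZl, dotvZr) (dotvC w x).
lra.
Qed.

Lemma minimizer_monotone {alpha beta : R} {x y : 'rV[R]_n} :
  is_minimizer (fun l => g l + (alpha * enorm l ^+ 2)%:E)%E x ->
  is_minimizer (fun l => g l + (beta * enorm l ^+ 2)%:E)%E y ->
  0 <= dotv (y - x) (alpha *: x - beta *: y).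
Proof.
move=> xmin ymin.
have := minimizer_subgradient y xmin; have := minimizer_subgradient x ymin.
have /fineK <- := minimizer_fin_num xmin; have /fineK <- := minimizer_fin_num ymin.
rewrite -!EFinD !lee_fin !(dotvBl, dotvBr, dotvZl, dotvZr) (dotvC y x).
lra.
Qed.

End ConvexMinimizers.

Theorem lemma4p3 (R : realType) (n : nat) (p mu : R) (g : 'rV[R]_n -> \bar R)
  (lstar lk lk1 : 'rV[R]_n) :
  1 <= p -> 0 < mu ->
  ext_convex g -> (exists x, g x != +oo%E) ->
  is_minimizer (fun l => g l + (mu / (1 + p^-1) * enorm l `^ (1 + p^-1))%:E)%E lstar ->
  lstar != 0 ->
  0 < enorm lk ->
  is_minimizer (fun l => g l + (mu / 2 * enorm lk `^ (p^-1 - 1) * enorm l ^+ 2)%:E)%E lk1 ->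
  0 <= dotv (lk1 - lstar)
         (enorm lk `^ (1 - p^-1) *: lstar - enorm lstar `^ (1 - p^-1) *: lk1)
  /\
  (enorm lk `^ (1 - p^-1) - enorm lstar `^ (1 - p^-1)) * dotv (lk1 - lstar) lk1
    >= enorm lk `^ (1 - p^-1) * enorm (lk1 - lstar) ^+ 2.
Proof.
move=> p1 mu0 g_convex g_proper lstar_min lstar0 lk0 lk1_min.
set q := p^-1; have q_range : -1 < q <= 1.
  have q0 : 0 < q by rewrite invr_gt0 (lt_le_trans ltr01 p1).
  by rewrite invf_le1 ?(lt_le_trans ltr01 p1) // p1 andbT; lra.
have lstar_quad := minimizer_powR_quad (ltW mu0) q_range lstar0 lstar_min.
have mono := minimizer_monotone g_convex g_proper lstar_quad lk1_min.
set a := enorm lk in lk0 lk1_min mono *; set s := enorm lstar in lstar_quad mono *.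
have s0 : 0 < s by rewrite enorm_gt0.
set a' := a `^ (1 - q); set s' := s `^ (1 - q).
have a'0 : 0 < a' by rewrite powR_gt0.
have s'0 : 0 < s' by rewrite powR_gt0.
have claim1 : 0 <= dotv (lk1 - lstar) (a' *: lstar - s' *: lk1).
  have -> : a' *: lstar - s' *: lk1 =
      (2 / mu * a' * s') *: (mu / 2 * s `^ (q - 1) *: lstar - mu / 2 * a `^ (q - 1) *: lk1).
    rewrite scalerBr !scalerA -[q - 1]opprB !powRN -/a' -/s'.
    by congr (_ *: _ - _ *: _); field; rewrite ?gt_eqF.
  by rewrite dotvZr mulr_ge0 // !mulr_ge0 ?invr_ge0 ?ltW.
split=> //; move: claim1.
have -> : a' *: lstar - s' *: lk1 = (a' - s') *: lk1 - a' *: (lk1 - lstar).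
  by rewrite scalerBl scalerBr opprB [RHS]addrC addrA subrK.
by rewrite dotvBr !dotvZr subr_ge0 -enorm_sq.
Qed.
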